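(* Let $\mathbf{C}=\{\mathfrak{F}_k\mid k\ge1\}$ and let $\vDash_{\mathbf{ML}}$ denote $\vDash_{\mathbf{C}}$. Let $p_0$ be a propositional variable not occurring in any $\boldsymbol{bd}_i$. Then $\{\boldsymbol{bd}_i\to p_0\mid i\ge1\}\vDash_{\mathbf{ML}}p_0$, but $\Gamma'\nvDash_{\mathbf{ML}}p_0$ for every finite $\Gamma'\subseteq\{\boldsymbol{bd}_i\to p_0\mid i\ge1\}$. Hence $\vDash_{\mathbf{ML}}$ is not compact.
   Context: Formulas are built from a countably infinite set of propositional variables and $\bot$ using $\land,\lor,\to$; intuitionistic Kripke semantics with valuations assigning upward-closed sets. For $k\ge1$, $\mathfrak{F}_k=\langle\wp^*(k),\supseteq\rangle$, where $k=\{0,\dots,k-1\}$ and $\wp^*(k)$ is the set of non-empty subsets of $k$. For a poset $\mathfrak{P}$, $\Gamma\vDash_{\mathfrak{P}}\varphi$ means: for every valuation $V$ and every point $w$, if all formulas of $\Gamma$ are forced at $w$ then $\varphi$ is forced at $w$; for a class $\mathbf{C}$, $\Gamma\vDash_{\mathbf{C}}\varphi$ means $\Gamma\vDash_{\mathfrak{P}}\varphi$ for all $\mathfrak{P}\in\mathbf{C}$. For $i\ge1$, $\boldsymbol{bd}_i$ is the formula $p_i\lor(p_i\to(p_{i-1}\lor(p_{i-1}\to(\cdots(p_1\lor(p_1\to\bot))\cdots))))$ in the variables $p_1,\dots,p_i$. *)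

From mathcomp Require Import all_boot.
Set Implicit Arguments. Unset Strict Implicit. Unset Printing Implicit Defensive.

Inductive form : Type :=
| Var : nat -> form
| Bot : form
| And : form -> form -> form
| Or  : form -> form -> form
| Imp : form -> form -> form.

Fixpoint occurs (n : nat) (f : form) : Prop :=
  match f with
  | Var m => m = n
  | Bot => False
  | And a b | Or a b | Imp a b => occurs n a \/ occurs n b
  end.

(* bd_i = p_i \/ (p_i -> bd_{i-1}), with bd_0 := Bot, so that
   bd_1 = p_1 \/ (p_1 -> Bot). Only used for i >= 1. *)
Fixpoint bd (i : nat) : form :=
  match i with
  | 0 => Bot
  | i'.+1 => Or (Var i'.+1) (Imp (Var i'.+1) (bd i'))
  end.

(* Kripke semantics on a (pre)ordered set W with order R (R w v : v is above w). *)
Definition upward_closed (W : Type) (R : W -> W -> Prop) (V : nat -> W -> Prop) :=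
  forall p w v, R w v -> V p w -> V p v.

Fixpoint forces (W : Type) (R : W -> W -> Prop) (V : nat -> W -> Prop)
    (w : W) (f : form) : Prop :=
  match f with
  | Var p => V p w
  | Bot => False
  | And a b => forces R V w a /\ forces R V w b
  | Or a b => forces R V w a \/ forces R V w b
  | Imp a b => forall v, R w v -> forces R V v a -> forces R V v b
  end.

Definition entails (W : Type) (R : W -> W -> Prop) (Gamma : form -> Prop) (phi : form) :=
  forall V : nat -> W -> Prop, upward_closed R V ->
  forall w : W, (forall g, Gamma g -> forces R V w g) -> forces R V w phi.

Definition Fk_carrier (k : nat) := {A : {set 'I_k} | A != set0}.
Definition Fk_le (k : nat) (A B : Fk_carrier k) : Prop := val B \subset val A.

Definition entails_ML (Gamma : form -> Prop) (phi : form) :=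
  forall k, 1 <= k -> entails (@Fk_le k) Gamma phi.

Fixpoint inseq (g : form) (s : seq form) : Prop :=
  match s with nil => False | cons h t => h = g \/ inseq g t end.

Definition compact_ML :=
  forall (Gamma : form -> Prop) (phi : form), entails_ML Gamma phi ->
  exists Gamma' : seq form, (forall g, inseq g Gamma' -> Gamma g) /\
    entails_ML (fun g => inseq g Gamma') phi.

(* Every point of F_k has at most k elements, and bd_i is forced at every
   point w with at most i elements: if p_i fails at w, any successor of w
   forcing p_i is a proper subset of w, where bd_(i-1) holds by induction.
   Hence bd_k is valid in F_k, and the premise bd_k -> p_0 forces p_0.

   Conversely, a finite set of premises only mentions bd_i with i <= N.  In
   F_(N+1) let p_j (j >= 1) hold at the subsets of {0, ..., j-1} and p_0 at
   every point other than the top {0, ..., N}.  On the initial segments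
   {0, ..., m}, bd_i fails whenever i <= m, so at the top every bd_i -> p_0
   with i <= N holds while p_0 fails. *)

From Stdlib Require Import Classical.
From mathcomp Require Import all_boot.

Set Implicit Arguments. Unset Strict Implicit.

Lemma forces_persistent (W : Type) (R : W -> W -> Prop) (V : nat -> W -> Prop) :
  (forall a b c, R a b -> R b c -> R a c) -> upward_closed R V ->
  forall f w v, R w v -> forces R V w f -> forces R V v f.
Proof.
move=> trR upV; elim=> [p||a IHa b IHb|a IHa b IHb|a IHa b IHb] w v Rwv /=.
- exact: upV.
- by [].
- by case=> ha hb; split; [exact: IHa ha | exact: IHb hb].
- by case=> h; [left; exact: IHa h | right; exact: IHb h].
- by move=> h u Rvu; apply: h; exact: trR Rwv Rvu.
Qed.

Lemma Fk_le_trans k (a b c : Fk_carrier k) : Fk_le a b -> Fk_le b c -> Fk_le a c.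
Proof. by move=> hab hbc; exact: subset_trans hbc hab. Qed.

Lemma Fk_le_refl k (a : Fk_carrier k) : Fk_le a a.
Proof. exact: subxx. Qed.

Lemma forces_bd_small_card k V : upward_closed (@Fk_le k) V ->
  forall i (w : Fk_carrier k), #|val w| <= i -> forces (@Fk_le k) V w (bd i).
Proof.
move=> upV; elim=> [|i IH] w hw /=.
  by case: w hw => A /= A_ne; rewrite leqn0 cards_eq0 (negbTE A_ne).
have [Vw | nVw] := classic (V i.+1 w); [by left | right].
move=> v wv Vv; apply: IH.
have [/eqP vw | vw] := boolP (val v == val w).
  by case: nVw; apply: upV Vv; rewrite /Fk_le vw.
by rewrite -ltnS (leq_trans _ hw) // proper_card // properEneq vw.
Qed.

Lemma bd_imp_entails_ML n :
  entails_ML (fun g => exists2 i, 1 <= i & g = Imp (bd i) (Var n)) (Var n).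
Proof.
move=> k k_gt0 V upV w hyp.
apply: (hyp _ (ex_intro2 _ _ k k_gt0 erefl)); first exact: Fk_le_refl.
apply: forces_bd_small_card => //; exact: leq_trans (max_card _) (eq_leq (card_ord k)).
Qed.

Lemma inseq_bound (P : nat -> form -> Prop) (s : seq form) :
  (forall g, inseq g s -> exists i, P i g) ->
  exists N, forall g, inseq g s -> exists2 i, i <= N & P i g.
Proof.
elim: s => [|h s IH] hs; first by exists 0.
have [N hN] := IH (fun g gs => hs g (or_intror gs)).
have [j Pjh] := hs h (or_introl erefl).
exists (maxn N j) => g [<- | gs]; first by exists j; rewrite ?leq_maxr.
by have [i iN Pig] := hN g gs; exists i; rewrite ?(leq_trans iN (leq_maxl _ _)).
Qed.

Section Countermodel.

Variable N : nat.

Local Notation le := (@Fk_le N.+1).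

Lemma segment_ne (m : nat) : [set x : 'I_N.+1 | x <= m] != set0.
Proof. by apply/set0Pn; exists ord0; rewrite inE. Qed.

Definition segment (m : nat) : Fk_carrier N.+1 := exist (fun A => A != set0) _ (segment_ne m).

Definition segment_val (p : nat) (B : Fk_carrier N.+1) : Prop :=
  if p is 0 then val B != setT else forall x : 'I_N.+1, x \in val B -> x < p.

Lemma segment_val_up : upward_closed le segment_val.
Proof.
move=> [|p] w v wv /=; last by move=> h x /(subsetP wv); exact: h.
by apply: contraNneq => vT; rewrite eqEsubset subsetT -vT.
Qed.

Lemma segment_le (i m : nat) : i <= m -> le (segment m) (segment i).
Proof. by move=> im; apply/subsetP => x; rewrite !inE => /leq_trans; apply. Qed.

Lemma segment_refutes_bd i m : i <= m -> m <= N ->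
  ~ forces le segment_val (segment m) (bd i).
Proof.
elim: i m => [|i IH] m im mN //=; case.
  move=> /(_ (inord m)); rewrite inE inordK ?ltnS // => /(_ (leqnn m)).
  by rewrite leqNgt im.
move=> hbd; apply: (IH i (leqnn i) (leq_trans (ltnW im) mN)).
by apply: hbd; [exact: segment_le (ltnW im) | move=> x; rewrite inE].
Qed.

Lemma segment_top_forces_bd_imp i : i <= N ->
  forces le segment_val (segment N) (Imp (bd i) (Var 0)).
Proof.
move=> iN v topv bdv /=; apply/eqP => vT.
apply: (@segment_refutes_bd i N iN (leqnn N)).
apply: (forces_persistent (@Fk_le_trans _) segment_val_up _ bdv).
by rewrite /Fk_le (vT : val v = setT) subsetT.
Qed.

Lemma segment_top_refutes_p0 : ~ forces le segment_val (segment N) (Var 0).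
Proof.
by move=> /eqP; apply; apply/setP => x; rewrite !inE -ltnS ltn_ord.
Qed.

Lemma bd_imp_bounded_not_entails_ML (Gamma : form -> Prop) :
  (forall g, Gamma g -> exists2 i, i <= N & g = Imp (bd i) (Var 0)) ->
  ~ entails_ML Gamma (Var 0).
Proof.
move=> hGamma hent; apply: segment_top_refutes_p0.
apply: (hent N.+1 isT _ segment_val_up) => g /hGamma [i iN ->].
exact: segment_top_forces_bd_imp.
Qed.

End Countermodel.

Theorem mainTheorem11 (n0 : nat) :
  (forall i, 1 <= i -> ~ occurs n0 (bd i)) ->
  let Gamma := fun g => exists2 i, 1 <= i & g = Imp (bd i) (Var n0) in
  entails_ML Gamma (Var n0) /\
  (forall Gamma' : seq form, (forall g, inseq g Gamma' -> Gamma g) ->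
     ~ entails_ML (fun g => inseq g Gamma') (Var n0)) /\
  ~ compact_ML.
Proof.
move=> fresh.
have -> : n0 = 0 by case: n0 fresh => // n fresh; case: (fresh n.+1) => //; left.
move=> Gamma.
have finite_fails : forall Gamma' : seq form,
    (forall g, inseq g Gamma' -> Gamma g) ->
    ~ entails_ML (fun g => inseq g Gamma') (Var 0).
  move=> Gamma' sub.
  have [|N hN] := @inseq_bound (fun i g => g = Imp (bd i) (Var 0)) Gamma'.
    by move=> g /sub [i _ ->]; exists i.
  exact: bd_imp_bounded_not_entails_ML hN.
split; first exact: bd_imp_entails_ML.
split=> // compact.
have [Gamma' [sub hent]] := compact _ _ (@bd_imp_entails_ML 0).
exact: finite_fails sub hent.
Qed.
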